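(* Let $n\ge1$, $r\ge0$ be integers and $\lambda$ a partition with $\ell(\lambda)\le n$ and $\lambda_1\le r$. Then $(x_1\cdots x_n)^r\,\mathrm{spo}_\lambda(x_1,\dots,x_n;z)$ is a polynomial in $x_1,\dots,x_n$ (with coefficients polynomial in $z$), and \[ \left[(x_1\cdots x_n)^r\,\mathrm{spo}_\lambda(x_1,\dots,x_n;z)\right]\Big|_{x_1=0}=\begin{cases}(x_2\cdots x_n)^r\,\mathrm{spo}_{(\lambda_2,\dots,\lambda_n)}(x_2,\dots,x_n;z)&\text{if }\lambda_1=r,\\ 0&\text{otherwise.}\end{cases} \]
   Context: Here $z$ is a single indeterminate playing the role of $Y=(y_1)$ ($m=1$). $\bar x=1/x$. Orthosymplectic Schur function: order $1<\bar1<\cdots<n<\bar n<1'<\cdots<m'$; an orthosymplectic tableau of shape $\lambda$ is a filling such that the entries from $\{1,\bar1,\dots,n,\bar n\}$ form a symplectic tableau (weakly increasing along rows, strictly increasing down columns, entries in row $i$ are $\ge i$) and the remaining primed entries form a skew filling strictly increasing along rows and weakly increasing down columns; weight $\prod_i x_i^{\#i-\#\bar i}\prod_j y_j^{\#j'}$; $\mathrm{spo}_\lambda(X;Y)$ is the sum of weights. $F|_{x_1=0}$ denotes substitution $x_1=0$ in the polynomial $F$. *)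

From HB Require Import structures.
From mathcomp Require Import all_boot all_order all_algebra fraction.
From mathcomp Require Import mpoly.
Set Implicit Arguments. Unset Strict Implicit. Unset Printing Implicit Defensive.
Import Order.TTheory GRing.Theory Num.Theory.
Local Open Scope ring_scope.

(* Partitions: a weakly decreasing sequence of positive integers.
   length = size, lambda_1 = head 0 lambda, (lambda_2,...) = behead lambda. *)
Definition is_partition (la : seq nat) : bool :=
  sorted geq la && (0%N \notin la).

(* Alphabet for m unprimed indices x_1..x_m and ONE primed letter 1'
   (Y = (y_1) = (z)), encoded as 'I_(2m+1), order-preserving:
     k = 2i     <-> unbarred  i+1
     k = 2i+1   <-> barred    \bar{i+1}
     k = 2m     <-> 1'
   so the order 1 < \bar1 < ... < m < \bar m < 1' is the order on 'I_(2m+1). *)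
Definition letter (m : nat) := 'I_(m.*2).+1.
Definition is_primed m (k : letter m) : bool := (m.*2 <= k)%N.

Definition shapeR (la : seq nat) := size la.
Definition shapeC (la : seq nat) := foldr maxn 0%N la.
Definition in_shape (la : seq nat) (r c : nat) : bool := (c < nth 0%N la r)%N.

Definition filling m la := {ffun 'I_(shapeR la) * 'I_(shapeC la) -> letter m}.

Definition entry m la (T : filling m la) (r c : nat) : option (letter m) :=
  match insub r, insub c with
  | Some r', Some c' => if in_shape la r c then Some (T (r', c')) else None
  | _, _ => None
  end.

(* Orthosymplectic tableau of shape la (one primed letter):
   - cells outside the shape carry the fixed dummy value 0 (so that
     fillings correspond bijectively to fillings of the shape);
   - horizontally adjacent cells a | b:  a <= b, and a = b only if unprimed
     (unprimed weakly increasing, primed strictly increasing along rows);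
   - vertically adjacent cells a over b: a <= b, and a = b only if primed
     (unprimed strictly increasing, primed weakly increasing down columns);
   - an unprimed entry in row r (0-based) is >= unbarred r+1, i.e. k >= 2r.
   Since primed letters are largest, the unprimed entries form a subdiagram
   (a symplectic tableau) and the primed ones the complementary skew shape. *)
Definition is_osp_tableau m la (T : filling m la) : bool :=
  [forall rc : 'I_(shapeR la) * 'I_(shapeC la),
    let r := val rc.1 in let c := val rc.2 in
    if ~~ in_shape la r c then val (T rc) == 0%N
    else
    [&& (is_primed (T rc) || (r.*2 <= T rc)%N),
        (match entry T r c.+1 with
         | Some b => (T rc <= b)%N && ((T rc == b) ==> ~~ is_primed b)
         | None => true end) &
        (match entry T r.+1 c with
         | Some b => (T rc <= b)%N && ((T rc == b) ==> is_primed b)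
         | None => true end)]].

Definition letter_wt (F : fieldType) m (x : 'I_m -> F) (z : F) (k : letter m) : F :=
  match (insub (k./2) : option 'I_m) with
  | Some i => if odd k then (x i)^-1 else x i
  | None => z
  end.

Definition osp_wt (F : fieldType) m la (x : 'I_m -> F) (z : F) (T : filling m la) : F :=
  \prod_(rc : 'I_(shapeR la) * 'I_(shapeC la) | in_shape la rc.1 rc.2)
     letter_wt x z (T rc).

Definition spo (F : fieldType) m (la : seq nat) (x : 'I_m -> F) (z : F) : F :=
  \sum_(T : filling m la | is_osp_tableau T) osp_wt x z T.

(* The field of rational functions in x_1..x_n, z: variables 'X_i (i < n) are
   x_{i+1}, and 'X_n is z. *)
Definition RatF (n : nat) := {fraction {mpoly int[n.+1]}}.
Definition xvar n (i : 'I_n) : RatF n := tofrac ('X_(widen_ord (leqnSn n) i)).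
Definition zvar n : RatF n := tofrac ('X_(ord_max)).

Definition subst_x1_0 n (P : {mpoly int[n.+1]}) : RatF n :=
  mmap (fun c : int => c%:~R) (fun j : 'I_n.+1 => if val j == 0%N then 0 else tofrac 'X_j) P.

(* x_{i+2}, i < n-1: the variables x_2..x_n, read in RatF n *)
Definition xtail n (i : 'I_n.-1) : RatF n := tofrac ('X_(inord i.+1 : 'I_n.+1)).

From HB Require Import structures.
From mathcomp Require Import all_boot all_order all_algebra fraction.
From mathcomp Require Import mpoly.
From mathcomp Require Import zify ring.
Set Implicit Arguments. Unset Strict Implicit. Unset Printing Implicit Defensive.
Import Order.TTheory GRing.Theory Num.Theory.

(* Multiplied by (x_1 ... x_n)^r, the weight of every tableau becomes a
   monomial: the exponent of x_i is r + #i - #\bar i, which is nonnegative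
   because unprimed letters strictly increase down columns, so that \bar i
   occurs at most lambda_1 <= r times.  As 1 and \bar 1 can only sit in the top
   row, setting x_1 = 0 keeps exactly the tableaux whose top row consists of r
   letters \bar 1, which forces lambda_1 = r.  Deleting that row and lowering
   every remaining letter by one index is a weight-preserving bijection onto the
   tableaux of shape (lambda_2, ...) in x_2, ..., x_n. *)

Lemma nth_le_shapeC la r : nth 0 la r <= shapeC la.
Proof.
elim: la r => [|a l IH] [|r] //=; rewrite /shapeC /=; first exact: leq_maxl.
exact: leq_trans (IH r) (leq_maxr _ _).
Qed.

Lemma in_shape_box la r c : in_shape la r c -> (r < size la) /\ (c < shapeC la).
Proof.
rewrite /in_shape => lt_c; split; last exact: leq_trans lt_c (nth_le_shapeC la r).
by rewrite ltnNge; apply/negP => /(nth_default 0) nth_r; rewrite nth_r in lt_c.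
Qed.

Lemma in_shapeS la r c : in_shape la r.+1 c = in_shape (behead la) r c.
Proof. by rewrite /in_shape nth_behead. Qed.

Lemma is_partition_behead la : is_partition la -> is_partition (behead la).
Proof.
case: la => [|a l] //= /andP [la_sorted]; rewrite inE negb_or => /andP [_ l0].
by rewrite /is_partition (path_sorted la_sorted).
Qed.

Lemma partition_nth_le la r1 r2 : is_partition la -> r1 <= r2 ->
  nth 0 la r2 <= nth 0 la r1.
Proof.
case/andP => la_sorted _ le_r; case: (ltnP r2 (size la)) => r2_lt; last by rewrite nth_default.
have geq_trans : transitive geq by move=> a b c ab bc; exact: leq_trans bc ab.
by apply: (sorted_leq_nth geq_trans leqnn 0 la_sorted); rewrite ?inE //; lia.
Qed.

Lemma nth_le_head la r : is_partition la -> nth 0 la r <= head 0 la.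
Proof. by move=> la_part; rewrite -nth0; apply: partition_nth_le. Qed.

Lemma in_shape_up la r1 r2 c : is_partition la -> r1 <= r2 ->
  in_shape la r2 c -> in_shape la r1 c.
Proof. by move=> la_part le_r /leq_trans; apply; apply: partition_nth_le. Qed.

Lemma big_in_shape (R : Type) (idx : R) (op : Monoid.com_law idx) la (F : nat -> nat -> R) :
  \big[op/idx]_(rc : 'I_(shapeR la) * 'I_(shapeC la) | in_shape la rc.1 rc.2) F rc.1 rc.2
  = \big[op/idx]_(r < size la) \big[op/idx]_(c < nth 0 la r) F r c.
Proof.
rewrite -(pair_big_dep xpredT (fun (i : 'I_(shapeR la)) (j : 'I_(shapeC la)) => in_shape la i j)
  (fun i j => F (val i) (val j))).
by apply: eq_bigr => i _; rewrite (big_ord_widen _ _ (nth_le_shapeC la i)).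
Qed.

(* A filling read as a grid of natural numbers, [0] outside the bounding box. *)
Definition cell_letter m la (T : filling m la) (r c : nat) : letter m :=
  match (insub r : option 'I_(shapeR la)), (insub c : option 'I_(shapeC la)) with
  | Some r', Some c' => T (r', c')
  | _, _ => ord0
  end.

Definition cell m la (T : filling m la) r c : nat := cell_letter T r c.

Lemma cell_letter_ord m la (T : filling m la) (i : 'I_(shapeR la)) (j : 'I_(shapeC la)) :
  cell_letter T i j = T (i, j).
Proof. by rewrite /cell_letter !valK. Qed.

Lemma cell_le m la (T : filling m la) r c : cell T r c <= m.*2.
Proof. by rewrite -ltnS ltn_ord. Qed.

Lemma filling_eq m la (T1 T2 : filling m la) :
  (forall r c, r < size la -> c < shapeC la -> cell T1 r c = cell T2 r c) -> T1 = T2.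
Proof.
move=> eq_cell; apply/ffunP => -[i j]; apply: val_inj.
by rewrite -!cell_letter_ord; apply: eq_cell.
Qed.

Lemma entryE m la (T : filling m la) r c :
  entry T r c = if in_shape la r c then Some (cell_letter T r c) else None.
Proof.
rewrite /entry /cell_letter; case: (@insubP _ _ 'I_(shapeR la) r) => [i _ ir|]; last first.
  by case: ifP => // /in_shape_box [r_lt _]; rewrite r_lt.
case: (@insubP _ _ 'I_(shapeC la) c) => [j _ jc|]; first by case: ifP => //; rewrite -ir -jc.
by case: ifP => // /in_shape_box [_ c_lt]; rewrite c_lt.
Qed.

Definition filling_of m la (f : nat -> nat -> nat) : filling m la :=
  [ffun rc => inord (f (val rc.1) (val rc.2))].

Lemma cell_filling_of m la f r c : r < size la -> c < shapeC la -> f r c <= m.*2 ->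
  cell (filling_of m la f) r c = f r c.
Proof.
move=> r_lt c_lt; rewrite /cell /cell_letter.
case: (@insubP _ _ 'I_(shapeR la) r) => [i _ <-|]; last by rewrite r_lt.
case: (@insubP _ _ 'I_(shapeC la) c) => [j _ <-|]; last by rewrite c_lt.
by rewrite ffunE => /inordK.
Qed.

Definition osp_grid m la (g : nat -> nat -> nat) : Prop :=
  (forall r c, in_shape la r c ->
   [/\ (m.*2 <= g r c) || (r.*2 <= g r c),
       in_shape la r c.+1 ->
         (g r c <= g r c.+1) && ((g r c == g r c.+1) ==> ~~ (m.*2 <= g r c.+1)) &
       in_shape la r.+1 c ->
         (g r c <= g r.+1 c) && ((g r c == g r.+1 c) ==> (m.*2 <= g r.+1 c))])
  /\ (forall r c, r < size la -> c < shapeC la -> ~~ in_shape la r c -> g r c = 0).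

Lemma is_osp_tableauP m la (T : filling m la) :
  reflect (osp_grid m la (cell T)) (is_osp_tableau T).
Proof.
apply: (iffP forallP) => [osp_T | [osp_in osp_out] [i j] /=].
- split=> [r c rc_in | r c r_lt c_lt rc_out].
  + have [r_lt c_lt] := in_shape_box rc_in.
    have := osp_T (Ordinal r_lt, Ordinal c_lt).
    rewrite /= rc_in /= !entryE -(cell_letter_ord T (Ordinal r_lt) (Ordinal c_lt)).
    by case/and3P => h1 h2 h3; split=> // next_in; [move: h2 | move: h3]; rewrite next_in.
  + have := osp_T (Ordinal r_lt, Ordinal c_lt).
    by rewrite /= rc_out -(cell_letter_ord T (Ordinal r_lt) (Ordinal c_lt)) => /eqP.
- rewrite -cell_letter_ord; case: (boolP (in_shape la i j)) => [ij_in | ij_out] /=.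
    have [-> right_ok down_ok] := osp_in _ _ ij_in; rewrite !entryE /=.
    apply/andP; split; first by case: (boolP (in_shape la i j.+1)) => // /right_ok.
    by case: (boolP (in_shape la i.+1 j)) => // /down_ok.
  by apply/eqP; apply: osp_out.
Qed.

Lemma sum_nat_bool_card (I : finType) (P : pred I) : \sum_i P i = #|P|.
Proof. by rewrite -sum1_card [RHS]big_mkcond. Qed.

Definition mult m la (T : filling m la) (k : nat) : nat :=
  \sum_(r < size la) \sum_(c < nth 0 la r) (cell T r c == k).

Lemma mult_split m la (T : filling m la) k :
  mult T k = \sum_(c < head 0 la) (cell T 0 c == k)
    + \sum_(r < size (behead la)) \sum_(c < nth 0 (behead la) r) (cell T r.+1 c == k).
Proof. by rewrite /mult; case: la T => [|a l] T /=; rewrite ?big_ord0 ?big_ord_recl. Qed.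

Section OspGrid.
Variables (m : nat) (la : seq nat) (T : filling m la).
Hypothesis osp_T : osp_grid m la (cell T).

Lemma cell_ge_row r c : in_shape la r c -> (m.*2 <= cell T r c) || (r.*2 <= cell T r c).
Proof. by case: osp_T => osp_in _ /osp_in []. Qed.

Lemma cell_out r c : r < size la -> c < shapeC la -> ~~ in_shape la r c ->
  cell T r c = 0.
Proof. by case: osp_T => _; apply. Qed.

Lemma cell_ge2 r c : 0 < m -> in_shape la r.+1 c -> 2 <= cell T r.+1 c.
Proof. by move=> m_gt0 /cell_ge_row; lia. Qed.

Hypothesis la_part : is_partition la.

Lemma cell_col_mono r d c : in_shape la (r + d) c -> cell T r c <= cell T (r + d) c.
Proof.
elim: d => [|d IHd] rdc_in; first by rewrite addn0.
have rd_in : in_shape la (r + d) c by apply: in_shape_up rdc_in; lia.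
case: osp_T => osp_in _; have [_ _ down_ok] := osp_in _ _ rd_in.
rewrite addnS in rdc_in *; have /andP [down _] := down_ok rdc_in.
exact: leq_trans (IHd rd_in) down.
Qed.

Lemma cell_col_strict r1 r2 c : in_shape la r2 c -> r1 < r2 ->
  cell T r1 c < m.*2 -> cell T r1 c < cell T r2 c.
Proof.
move=> r2c_in lt_r unprimed; pose d := (r2 - r1).-1.
have r2E : r2 = (r1 + d).+1 by rewrite /d; lia.
have r1d_in : in_shape la (r1 + d) c by apply: in_shape_up r2c_in; lia.
have mono := cell_col_mono r1d_in.
case: osp_T => osp_in _; have [_ _] := osp_in _ _ r1d_in.
rewrite -r2E => /(_ r2c_in) /andP [down /implyP strict].
apply: contraTT unprimed; rewrite -!leqNgt => le_cell.
have /strict m_le : cell T (r1 + d) c == cell T r2 c.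
  by rewrite eqn_leq down (leq_trans le_cell mono).
exact: leq_trans m_le le_cell.
Qed.

Lemma mult_le_head k : k < m.*2 -> mult T k <= head 0 la.
Proof.
move=> k_unprimed; rewrite /mult (eq_bigr (fun r : 'I_(size la) =>
    \sum_(c < head 0 la) ((c < nth 0 la r) && (cell T r c == k)))); last first.
  move=> r _; rewrite (big_ord_widen _ (fun c => nat_of_bool (cell T r c == k))
    (nth_le_head r la_part)) big_mkcond /=.
  by apply: eq_bigr => c _; case: ifP.
rewrite exchange_big /= -[leqRHS]card_ord -sum1_card leq_sum // => c _.
rewrite sum_nat_bool_card; apply/card_le1_eqP => i j.
rewrite /= => /andP [i_in /eqP cell_i] /andP [j_in /eqP cell_j]; apply: val_inj.
have [lt_ij|lt_ji|//] := ltngtP i j.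
- by have := cell_col_strict j_in lt_ij; rewrite cell_i cell_j ltnn => /(_ k_unprimed).
- by have := cell_col_strict i_in lt_ji; rewrite cell_i cell_j ltnn => /(_ k_unprimed).
Qed.

Lemma mult_top_row k : 0 < m -> k < 2 -> mult T k = \sum_(c < head 0 la) (cell T 0 c == k).
Proof.
move=> m_gt0 k_lt; rewrite mult_split [X in (_ + X)]big1 ?addn0 // => r _.
rewrite big1 // => c _.
have rc_in : in_shape la r.+1 c by rewrite in_shapeS /in_shape ltn_ord.
by have := cell_ge2 m_gt0 rc_in; case: eqP => // ->; lia.
Qed.

Lemma top_row_bar1 : 0 < m -> mult T 1 = head 0 la ->
  forall c, c < head 0 la -> cell T 0 c = 1.
Proof.
move=> m_gt0; rewrite mult_top_row // sum_nat_bool_card => card_bar1 c c_lt.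
have /subset_cardP : #|[pred c : 'I_(head 0 la) | cell T 0 c == 1]| = #|'I_(head 0 la)|.
  by rewrite card_bar1 card_ord.
by move=> /(_ (subset_predT _)) /(_ (Ordinal c_lt)); rewrite !inE => /eqP.
Qed.

End OspGrid.

(* The alphabet of [x_2, ..., x_n] is embedded by [k |-> k + 2]. *)
Definition add_bar1_row m la (T : filling m (behead la)) : filling m.+1 la :=
  filling_of m.+1 la (fun r c =>
    if in_shape la r c then if r is r'.+1 then cell T r' c + 2 else 1 else 0).

Definition drop_top_row m la (T : filling m.+1 la) : filling m (behead la) :=
  filling_of m (behead la) (fun r c =>
    if in_shape (behead la) r c then cell T r.+1 c - 2 else 0).

Section TopRow.
Variables (m : nat) (la : seq nat).

Lemma cell_add_bar1_row (T : filling m (behead la)) r c : in_shape la r c ->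
  cell (add_bar1_row T) r c = if r is r'.+1 then cell T r' c + 2 else 1.
Proof.
move=> rc_in; have [r_lt c_lt] := in_shape_box rc_in.
rewrite cell_filling_of // rc_in //; case: r {r_lt rc_in} => [|r] //.
by have := cell_le T r c; lia.
Qed.

Lemma cell_add_bar1_row_out (T : filling m (behead la)) r c :
  r < size la -> c < shapeC la -> ~~ in_shape la r c -> cell (add_bar1_row T) r c = 0.
Proof. by move=> r_lt c_lt rc_out; rewrite cell_filling_of // (negbTE rc_out). Qed.

Lemma cell_drop_top_row (T : filling m.+1 la) r c : in_shape (behead la) r c ->
  cell (drop_top_row T) r c = cell T r.+1 c - 2.
Proof.
move=> rc_in; have [r_lt c_lt] := in_shape_box rc_in.
by rewrite cell_filling_of // rc_in //; have := cell_le T r.+1 c; lia.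
Qed.

Lemma cell_drop_top_row_out (T : filling m.+1 la) r c :
  r < size (behead la) -> c < shapeC (behead la) -> ~~ in_shape (behead la) r c ->
  cell (drop_top_row T) r c = 0.
Proof. by move=> r_lt c_lt rc_out; rewrite cell_filling_of // (negbTE rc_out). Qed.

Lemma add_bar1_row_osp (T : filling m (behead la)) :
  is_osp_tableau T -> is_osp_tableau (add_bar1_row T).
Proof.
move=> /is_osp_tableauP [osp_in _]; apply/is_osp_tableauP; split; last first.
  exact: cell_add_bar1_row_out.
move=> r c rc_in; rewrite (cell_add_bar1_row _ rc_in).
case: r rc_in => [|r] rc_in.
  by split=> // next_in; rewrite (cell_add_bar1_row _ next_in) //; lia.
rewrite in_shapeS in rc_in; have [h1 h2 h3] := osp_in _ _ rc_in.
split=> [|next_in|next_in]; first by move: h1; lia.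
- rewrite (cell_add_bar1_row _ next_in); rewrite in_shapeS in next_in.
  by move: (h2 next_in); lia.
- rewrite (cell_add_bar1_row _ next_in); rewrite in_shapeS in next_in.
  by move: (h3 next_in); lia.
Qed.

Lemma drop_top_row_osp (T : filling m.+1 la) :
  is_osp_tableau T -> is_osp_tableau (drop_top_row T).
Proof.
move=> /is_osp_tableauP osp_T; have [osp_in _] := osp_T.
apply/is_osp_tableauP; split; last exact: cell_drop_top_row_out.
have ge2 r c : in_shape la r.+1 c -> 2 <= cell T r.+1 c := cell_ge2 osp_T (ltn0Sn m).
move=> r c rc_in; rewrite (cell_drop_top_row _ rc_in); rewrite -in_shapeS in rc_in.
have [h1 h2 h3] := osp_in _ _ rc_in; have := ge2 _ _ rc_in.
split=> [|next_in|next_in]; first by move: h1; lia.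
- rewrite (cell_drop_top_row _ next_in); rewrite -in_shapeS in next_in.
  by have := ge2 _ _ next_in; move: (h2 next_in); lia.
- rewrite (cell_drop_top_row _ next_in); rewrite -in_shapeS in next_in.
  by have := ge2 _ _ next_in; move: (h3 next_in); lia.
Qed.

Lemma drop_top_rowK (T : filling m (behead la)) :
  is_osp_tableau T -> drop_top_row (add_bar1_row T) = T.
Proof.
move=> /is_osp_tableauP [_ osp_out]; apply: filling_eq => r c r_lt c_lt.
case: (boolP (in_shape (behead la) r c)) => rc_in.
  by rewrite cell_drop_top_row // cell_add_bar1_row ?in_shapeS //; lia.
by rewrite cell_drop_top_row_out // osp_out.
Qed.

Lemma add_bar1_rowK (T : filling m.+1 la) : is_partition la -> is_osp_tableau T ->
  (forall c, c < head 0 la -> cell T 0 c = 1) -> add_bar1_row (drop_top_row T) = T.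
Proof.
move=> la_part /is_osp_tableauP osp_T top_bar1; apply: filling_eq => r c r_lt c_lt.
case: (boolP (in_shape la r c)) => rc_in; last first.
  by rewrite cell_add_bar1_row_out // (cell_out osp_T).
rewrite cell_add_bar1_row //; case: r r_lt rc_in => [|r] r_lt rc_in; first by rewrite top_bar1.
have := cell_ge2 osp_T isT rc_in.
by rewrite cell_drop_top_row -?in_shapeS //; lia.
Qed.

Lemma mult_add_bar1_row (T : filling m (behead la)) k :
  mult (add_bar1_row T) k.+2 = mult T k.
Proof.
rewrite mult_split big1 => [|c _]; last by rewrite cell_add_bar1_row // /in_shape nth0.
rewrite add0n /mult; apply: eq_bigr => r _; apply: eq_bigr => c _.
by rewrite cell_add_bar1_row ?in_shapeS ?/in_shape // addn2 eqSS.
Qed.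

Lemma mult_add_bar1_row_top (T : filling m (behead la)) :
  mult (add_bar1_row T) 0 = 0 /\ mult (add_bar1_row T) 1 = head 0 la.
Proof.
have lower_rows k : k < 2 -> \sum_(r < size (behead la)) \sum_(c < nth 0 (behead la) r)
     (cell (add_bar1_row T) r.+1 c == k) = 0.
  move=> k_lt; rewrite big1 // => r _; rewrite big1 // => c _.
  by rewrite cell_add_bar1_row ?in_shapeS ?/in_shape //; case: eqP => //; lia.
rewrite !mult_split !lower_rows // !addn0; split.
  by rewrite big1 // => c _; rewrite cell_add_bar1_row // /in_shape nth0.
rewrite -[RHS]card_ord -sum1_card; apply: eq_bigr => c _.
by rewrite cell_add_bar1_row // /in_shape nth0.
Qed.

End TopRow.

Definition osp_exp m r la (T : filling m la) : 'X_{1..m.+1} :=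
  [multinom if i < m then r + mult T i.*2 - mult T i.*2.+1 else mult T m.*2
  | i < m.+1].

Lemma osp_exp_widen m r la (T : filling m la) (i : 'I_m) :
  osp_exp r T (widen_ord (leqnSn m) i) = r + mult T i.*2 - mult T i.*2.+1.
Proof. by rewrite mnmE /= ltn_ord. Qed.

Lemma osp_exp_max m r la (T : filling m la) : osp_exp r T ord_max = mult T m.*2.
Proof. by rewrite mnmE /= ltnn. Qed.

Lemma osp_exp_add_bar1_row m r la (T : filling m (behead la)) (i : 'I_m.+1) :
  osp_exp r (add_bar1_row T) (lift ord0 i) = osp_exp r T i.
Proof. by rewrite !mnmE /= /bump add1n ltnS doubleS !mult_add_bar1_row. Qed.

Lemma osp_exp_add_bar1_row0 m r la (T : filling m (behead la)) :
  osp_exp r (add_bar1_row T) ord0 = r - head 0 la.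
Proof.
by have [mult0 mult1] := mult_add_bar1_row_top T; rewrite mnmE /= mult0 mult1 addn0.
Qed.

Lemma osp_exp0_eq0 m r la (T : filling m.+1 la) : is_partition la -> head 0 la <= r ->
  is_osp_tableau T -> osp_exp r T ord0 = 0 ->
  head 0 la = r /\ add_bar1_row (drop_top_row T) = T.
Proof.
move=> la_part head_le osp_T; rewrite mnmE /= -[0.*2]/0 -[0.*2.+1]/1 => x1_free.
have /is_osp_tableauP osp_grid_T := osp_T.
have bar1_le := mult_le_head osp_grid_T la_part (isT : 1 < m.+1.*2).
have [head_r bar1_full] : head 0 la = r /\ mult T 1 = head 0 la by lia.
by split=> //; apply: add_bar1_rowK => //; apply: top_row_bar1.
Qed.

Local Open Scope ring_scope.

Lemma letter_wt_exp (F : fieldType) m (x : 'I_m -> F) z (k : letter m) :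
  letter_wt x z k =
  (\prod_(i < m) (x i ^+ (k == i.*2 :> nat) * (x i)^-1 ^+ (k == i.*2.+1 :> nat)))
  * z ^+ (k == m.*2 :> nat).
Proof.
have k_le : (k <= m.*2)%N by rewrite -ltnS.
rewrite /letter_wt; have kE := odd_double_half k; set q := k./2 in kE *; clearbody q.
have off_q (j : 'I_m) :
    (j : nat) != q -> (k == j.*2 :> nat) = false /\ (k == j.*2.+1 :> nat) = false.
  by move: kE; case: (odd k) => /= kE jq; split; apply/negbTE; lia.
case: (@insubP _ _ 'I_m q) => [i _ iq | ].
- rewrite (bigD1 i) //= big1 => [|j ji]; last first.
    have /off_q [-> ->] : (j : nat) != q by rewrite -iq.
    by rewrite /= !expr0 mulr1.
  have -> : (k == m.*2 :> nat) = false by apply/negbTE; move: kE (ltn_ord i); rewrite iq; lia.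
  move: kE; rewrite -iq; case: (odd k) => /= kE.
  + have [-> ->] : (k == i.*2 :> nat) = false /\ (k == i.*2.+1 :> nat).
      by split; [apply/negbTE | apply/eqP]; lia.
    by rewrite expr0 expr1 mul1r !mulr1.
  + have [-> ->] : (k == i.*2 :> nat) /\ (k == i.*2.+1 :> nat) = false.
      by split; [apply/eqP | apply/negbTE]; lia.
    by rewrite expr0 expr1 !mulr1.
- rewrite -leqNgt => q_ge.
  have -> : (k == m.*2 :> nat) by apply/eqP; move: kE; case: (odd k) => /=; lia.
  rewrite expr1 big1 ?mul1r // => j _.
  have /off_q [-> ->] : (j : nat) != q by have := ltn_ord j; lia.
  by rewrite /= !expr0 mulr1.
Qed.

Lemma osp_wt_exp (F : fieldType) m la (x : 'I_m -> F) z (T : filling m la) :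
  osp_wt x z T =
  (\prod_(i < m) (x i ^+ mult T i.*2 * (x i)^-1 ^+ mult T i.*2.+1)) * z ^+ mult T m.*2.
Proof.
rewrite /osp_wt (eq_bigr (fun rc : 'I_(shapeR la) * 'I_(shapeC la) =>
  letter_wt x z (cell_letter T rc.1 rc.2))); last first.
  by move=> [i j] _; rewrite cell_letter_ord.
rewrite (big_in_shape _ la (fun r c => letter_wt x z (cell_letter T r c))).
under eq_bigr => r _ do under eq_bigr => c _ do rewrite letter_wt_exp.
under eq_bigr => r _ do rewrite big_split /=.
rewrite big_split /= /mult; congr (_ * _); last first.
  by rewrite -prodrXr; under eq_bigr do rewrite prodrXr.
under eq_bigr => r _ do rewrite exchange_big /=.
rewrite exchange_big /=; apply: eq_bigr => i _.
under eq_bigr => r _ do rewrite big_split /=.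
by rewrite big_split /= -!prodrXr; congr (_ * _); apply: eq_bigr => r _; rewrite prodrXr.
Qed.

(* The truncated subtraction in [osp_exp] is harmless: [\bar i] occurs at most
   [lambda_1 <= r] times. *)
Lemma osp_wt_monomial (F : fieldType) m la r (x : 'I_m -> F) z (T : filling m la) :
  (forall i, x i != 0) -> is_partition la -> (head 0%N la <= r)%N -> is_osp_tableau T ->
  (\prod_(i < m) x i) ^+ r * osp_wt x z T =
  (\prod_(i < m) x i ^+ osp_exp r T (widen_ord (leqnSn m) i)) * z ^+ osp_exp r T ord_max.
Proof.
move=> x_neq0 la_part head_le /is_osp_tableauP osp_T.
rewrite osp_wt_exp osp_exp_max mulrA -prodrXl -big_split /=; congr (_ * _).
apply: eq_bigr => i _; rewrite osp_exp_widen.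
have bar_le : (mult T i.*2.+1 <= r)%N.
  by apply: leq_trans head_le; apply: mult_le_head => //; have := ltn_ord i; lia.
have -> : (r + mult T i.*2 - mult T i.*2.+1 = r - mult T i.*2.+1 + mult T i.*2)%N by lia.
rewrite exprD -{1}(subnK bar_le) exprD exprVn.
have xbar_neq0 : x i ^+ mult T i.*2.+1 != 0 by rewrite expf_neq0.
by field.
Qed.

Lemma spo_monomial_sum (F : fieldType) m la r (x : 'I_m -> F) z :
  (forall i, x i != 0) -> is_partition la -> (head 0%N la <= r)%N ->
  (\prod_(i < m) x i) ^+ r * spo la x z =
  \sum_(T : filling m la | is_osp_tableau T)
    (\prod_(i < m) x i ^+ osp_exp r T (widen_ord (leqnSn m) i)) * z ^+ osp_exp r T ord_max.
Proof. by move=> *; rewrite /spo mulr_sumr; apply: eq_bigr => T; apply: osp_wt_monomial. Qed.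

Definition spo_poly m r la : {mpoly int[m.+1]} :=
  \sum_(T : filling m la | is_osp_tableau T) 'X_[osp_exp r T].

Lemma tofrac_mpolyX_neq0 n (i : 'I_n.+1) : tofrac ('X_i : {mpoly int[n.+1]}) != 0.
Proof. by rewrite tofrac_eq0 -msupp_eq0 msuppX. Qed.

Lemma tofrac_mpolyX n (e : 'X_{1..n.+1}) :
  tofrac ('X_[e] : {mpoly int[n.+1]}) =
  (\prod_(i < n) xvar i ^+ e (widen_ord (leqnSn n) i)) * zvar n ^+ e ord_max.
Proof.
rewrite mpolyXE_id rmorph_prod big_ord_recr /= rmorphXn; congr (_ * _).
by apply: eq_bigr => i _; rewrite rmorphXn.
Qed.

Lemma tofrac_spo_poly n r la : is_partition la -> (head 0%N la <= r)%N ->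
  tofrac (spo_poly n r la) = (\prod_(i < n) xvar i) ^+ r * spo la (@xvar n) (zvar n).
Proof.
move=> la_part head_le; rewrite spo_monomial_sum // => [|i]; last exact: tofrac_mpolyX_neq0.
by rewrite rmorph_sum; apply: eq_bigr => T _; apply: tofrac_mpolyX.
Qed.

Lemma subst_x1_0_mpolyX n (e : 'X_{1..n.+2}) :
  subst_x1_0 ('X_[e] : {mpoly int[n.+2]}) =
  (e ord0 == 0%N)%:R *
  ((\prod_(i < n) @xtail n.+1 i ^+ e (lift ord0 (widen_ord (leqnSn n) i)))
   * zvar n.+1 ^+ e (lift ord0 ord_max)).
Proof.
rewrite /subst_x1_0 /mmap msuppX big_seq1 mcoeffX eqxx /mmap1 big_ord_recl /= expr0n.
rewrite mulr1z mul1r big_ord_recr /=; congr (_ * (_ * _)).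
apply: eq_bigr => i _; congr (tofrac 'X__ ^+ _); apply: val_inj.
by rewrite /= inordK //; have := ltn_ord i; lia.
Qed.

Lemma subst_x1_0_spo_poly n r la : is_partition la -> (head 0%N la <= r)%N ->
  subst_x1_0 (spo_poly n.+1 r la) =
  (if head 0%N la == r
   then (\prod_(i < n) @xtail n.+1 i) ^+ r * spo (behead la) (@xtail n.+1) (zvar n.+1)
   else 0).
Proof.
move=> la_part head_le.
have -> : subst_x1_0 (spo_poly n.+1 r la) =
    \sum_(T : filling n.+1 la | is_osp_tableau T) subst_x1_0 'X_[osp_exp r T].
  by rewrite /subst_x1_0 raddf_sum.
under eq_bigr => T _ do rewrite subst_x1_0_mpolyX mulr_natl mulrb.
rewrite -big_mkcondr /=; case: eqVneq => [head_r | head_neq]; last first.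
  rewrite big1 // => T /andP [osp_T /eqP x1_free].
  by have [/eqP] := osp_exp0_eq0 la_part head_le osp_T x1_free; rewrite (negbTE head_neq).
have head'_le : (head 0%N (behead la) <= r)%N.
  by rewrite -head_r -!nth0 nth_behead; apply: partition_nth_le.
rewrite spo_monomial_sum ?is_partition_behead // => [|i]; last exact: tofrac_mpolyX_neq0.
rewrite (reindex_onto (@add_bar1_row n la) (@drop_top_row n la)) /=; last first.
  by move=> T /andP [osp_T /eqP /(osp_exp0_eq0 la_part head_le osp_T) []].
apply: eq_big => [T | T _].
- apply/idP/idP => [/andP [/andP [osp_add _] /eqP <-] | osp_T].
    exact: drop_top_row_osp.
  by rewrite add_bar1_row_osp // drop_top_rowK // osp_exp_add_bar1_row0 head_r subnn !eqxx.
- under eq_bigr do rewrite osp_exp_add_bar1_row.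
  by rewrite osp_exp_add_bar1_row.
Qed.

Unset Implicit Arguments.
Theorem lemma4p3 (n r : nat) (la : seq nat) :
  (1 <= n)%N -> is_partition la -> (size la <= n)%N -> (head 0%N la <= r)%N ->
  exists P : {mpoly int[n.+1]},
    tofrac P = (\prod_(i < n) xvar i) ^+ r * spo la (@xvar n) (zvar n) /\
    subst_x1_0 P =
      (if head 0%N la == r
       then (\prod_(i < n.-1) xtail i) ^+ r * spo (behead la) (@xtail n) (zvar n)
       else 0).
Proof.
case: n => [//|n] _ la_part _ head_le; exists (spo_poly n.+1 r la).
by split; [apply: tofrac_spo_poly | apply: subst_x1_0_spo_poly].
Qed.
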